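(* Let $G=K_n$ and let $F(v)=1-e^{-v}$ ($v\ge0$) be the exponential distribution (which is regular with virtual value $\phi(v)=v-1$ and Myerson reserve price $1$). Then: (i) for every price $p>0$, every equilibrium in $\mathcal{N}_{p\cdot\mathbf{1}}$ is symmetric, i.e. of the form $T\cdot\mathbf{1}$ with $T\,F(T)^{n-1}=p$, and this $T$ is unique; (ii) for all sufficiently large $n$, the equilibrium revenue at price $1$ is less than $2\log\log n$, while at price $p=(\log n)(1-1/n)^{n-1}$ the equilibrium threshold is $\log n$ and the revenue equals $p>\tfrac14\log n$. Hence the uniform price equal to the Myerson reserve price can lose a factor $\Omega(\log n/\log\log n)$ relative to the best uniform price.
   Context: Public-goods pricing game on the complete graph $K_n$: buyer $i$'s neighbours are all $j\neq i$. Values i.i.d. with cumulative distribution function $F$, $F(\infty)=1$. An equilibrium for price vector $\mathbf{p}$ is $\mathbf{T}\in[0,\infty]^n$ (buyer $i$ purchases iff $v_i\ge T_i$) with $T_i=p_i/\prod_{j\neq i}F(T_j)$ for all $i$; $\mathcal{N}_{\mathbf{p}}$ is the set of equilibria; $\mathcal{R}(\mathbf{p},\mathbf{T})=\sum_ip_i(1-F(T_i))$; $p\cdot\mathbf{1}$ is the uniform price vector; $\log$ is the natural logarithm. *)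

From Stdlib Require Import Reals Lra Lia Arith.
Open Scope R_scope.

(* Extended non-negative thresholds [0, oo]. *)
Inductive ER : Type := Fin (x : R) | Inf.

Definition Fexp (v : R) : R := if Rle_dec 0 v then 1 - exp (- v) else 0.

Definition FextE (t : ER) : R := match t with Fin x => Fexp x | Inf => 1 end.

Fixpoint prod_upto (n : nat) (g : nat -> R) : R :=
  match n with O => 1 | S k => prod_upto k g * g k end.

(* prod_{j < n, j <> i} F(T_j)  -- neighbours of i in K_n *)
Definition prod_others (n i : nat) (T : nat -> ER) : R :=
  prod_upto n (fun j => if Nat.eqb j i then 1 else FextE (T j)).

Fixpoint sum_upto (n : nat) (g : nat -> R) : R :=
  match n with O => 0 | S k => sum_upto k g + g k end.

Definition in_dom (t : ER) : Prop := match t with Fin x => 0 <= x | Inf => True end.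

(* T_i = p_i / P with convention p_i / 0 = oo (used with p_i > 0). *)
Definition threshold_eq (pi P : R) (t : ER) : Prop :=
  (P = 0 -> t = Inf) /\ (P <> 0 -> t = Fin (pi / P)).

Definition is_equilibrium (n : nat) (p : nat -> R) (T : nat -> ER) : Prop :=
  forall i, (i < n)%nat -> in_dom (T i) /\ threshold_eq (p i) (prod_others n i T) (T i).

Definition revenue (n : nat) (p : nat -> R) (T : nat -> ER) : R :=
  sum_upto n (fun i => p i * (1 - FextE (T i))).

From Stdlib Require Import Reals Lra Lia Arith.
From Coquelicot Require Import Coquelicot.
Open Scope R_scope.

(* At an equilibrium for a uniform price p > 0 every F(T_j) is
   positive, so every threshold is finite and positive, and multiplying
   T_i = p / prod_{j<>i} F(T_j) by F(T_i) gives the balance identity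
   T_i / F(T_i) = p / prod_j F(T_j), whose right side does not depend on i.
   Since v / (1 - e^{-v}) is strictly increasing on (0,oo), all thresholds
   coincide, say with t, and then t F(t)^(n-1) = p; this t is unique because
   v F(v)^k is strictly increasing on [0,oo).

   A symmetric equilibrium T.1 yields revenue n p e^{-T}.  At
   price 1 the threshold t satisfies (n-1) e^{-t} <= ln t (from
   1 - x <= e^{-x}), which forces n e^{-t} < 2 ln ln n once n >= 16.  At
   threshold ln n we have F(ln n) = 1 - 1/n, so the price
   p = ln n (1 - 1/n)^(n-1) has ln n as its unique equilibrium threshold,
   revenue n p e^{-ln n} = p, and p >= ln n / e > ln n / 4. *)

Lemma exp_pow (a : R) (k : nat) : exp a ^ k = exp (INR k * a).
Proof.
  induction k as [|k IH]; simpl pow.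
  - simpl. rewrite Rmult_0_l, exp_0. reflexivity.
  - rewrite IH, S_INR, <- exp_plus. f_equal; ring.
Qed.

Lemma exp_neg_bounds (x : R) : 0 < x -> 0 < exp (- x) < 1.
Proof.
  intros Hx. split; [apply exp_pos|].
  rewrite <- exp_0. apply exp_increasing. lra.
Qed.

Lemma Fexp_nonneg_arg (x : R) : 0 <= x -> Fexp x = 1 - exp (- x).
Proof. intros Hx. unfold Fexp. destruct (Rle_dec 0 x); [reflexivity | lra]. Qed.

Lemma Fexp_ge0 (x : R) : 0 <= Fexp x.
Proof.
  unfold Fexp. destruct (Rle_dec 0 x) as [Hx|]; [|lra].
  destruct (Req_dec x 0) as [->|Hx0].
  - rewrite Ropp_0, exp_0. lra.
  - pose proof (exp_neg_bounds x ltac:(lra)). lra.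
Qed.

Lemma Fexp_pos (x : R) : 0 < x -> 0 < Fexp x.
Proof.
  intros Hx. rewrite Fexp_nonneg_arg by lra.
  pose proof (exp_neg_bounds x Hx). lra.
Qed.

Lemma FextE_ge0 (t : ER) : 0 <= FextE t.
Proof. destruct t; simpl; [apply Fexp_ge0 | lra]. Qed.

(* v / F(v) is strictly increasing on (0,oo), stated without division:
   the mean value theorem applied to x F(a) - a F(x) on [a,b]. *)
Lemma ratio_strictly_increasing (a b : R) :
  0 < a < b -> a * (1 - exp (- b)) < b * (1 - exp (- a)).
Proof.
  intros [Ha Hab].
  destruct (MVT_cor2 (fun x => x * (1 - exp (- a)) - a * (1 - exp (- x)))
              (fun x => (1 - exp (- a)) - a * exp (- x)) a b Hab)
    as [c [Hc Hmid]].
  { intros c _. apply is_derive_Reals. auto_derive; auto. ring. }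
  assert (exp (- c) < exp (- a)) by (apply exp_increasing; lra).
  assert (1 + a < exp a) by (apply exp_ineq1; lra).
  assert (exp (- a) * exp a = 1)
    by (rewrite <- exp_plus; replace (- a + a) with 0 by ring; apply exp_0).
  assert (0 < exp (- a)) by apply exp_pos.
  assert (0 < 1 - exp (- a) - a * exp (- c)) by nra.
  nra.
Qed.

(* v F(v)^k is strictly increasing on [0,oo): the equilibrium equation of a
   symmetric profile has at most one solution. *)
Lemma threshold_map_strictly_increasing (a b : R) (k : nat) :
  0 <= a < b -> a * Fexp a ^ k < b * Fexp b ^ k.
Proof.
  intros [Ha Hab].
  assert (Fexp a <= Fexp b).
  { rewrite !Fexp_nonneg_arg by lra.
    assert (exp (- b) < exp (- a)) by (apply exp_increasing; lra). lra. }
  assert (0 < Fexp b) by (apply Fexp_pos; lra).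
  assert (Fexp a ^ k <= Fexp b ^ k) by (apply pow_incr; split; [apply Fexp_ge0 | auto]).
  assert (0 < Fexp b ^ k) by (apply pow_lt; lra).
  assert (0 <= Fexp a ^ k) by (apply pow_le, Fexp_ge0).
  nra.
Qed.

Lemma prod_ext (n : nat) (f g : nat -> R) :
  (forall j, (j < n)%nat -> f j = g j) -> prod_upto n f = prod_upto n g.
Proof.
  induction n as [|n IH]; simpl; intros H; auto.
  rewrite IH by (intros; apply H; lia). rewrite H by lia. reflexivity.
Qed.

Lemma sum_ext (n : nat) (f g : nat -> R) :
  (forall j, (j < n)%nat -> f j = g j) -> sum_upto n f = sum_upto n g.
Proof.
  induction n as [|n IH]; simpl; intros H; auto.
  rewrite IH by (intros; apply H; lia). rewrite H by lia. reflexivity.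
Qed.

Lemma sum_const (n : nat) (c : R) : sum_upto n (fun _ => c) = INR n * c.
Proof.
  induction n as [|n IH]; simpl sum_upto; [simpl; ring|].
  rewrite IH, S_INR. ring.
Qed.

Lemma prod_pos (n : nat) (g : nat -> R) :
  (forall j, (j < n)%nat -> 0 < g j) -> 0 < prod_upto n g.
Proof.
  induction n as [|n IH]; simpl; intros H; [lra|].
  apply Rmult_lt_0_compat; [apply IH; intros; apply H; lia | apply H; lia].
Qed.

Lemma prod_nonneg (n : nat) (g : nat -> R) :
  (forall j, (j < n)%nat -> 0 <= g j) -> 0 <= prod_upto n g.
Proof.
  induction n as [|n IH]; simpl; intros H; [lra|].
  apply Rmult_le_pos; [apply IH; intros; apply H; lia | apply H; lia].
Qed.

Lemma prod_skip_out_of_range (n i : nat) (g : nat -> R) : (n <= i)%nat ->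
  prod_upto n (fun j => if Nat.eqb j i then 1 else g j) = prod_upto n g.
Proof.
  intros Hi. apply prod_ext. intros j Hj.
  destruct (Nat.eqb_spec j i); [lia | reflexivity].
Qed.

Lemma prod_skip_mul (n i : nat) (g : nat -> R) : (i < n)%nat ->
  prod_upto n (fun j => if Nat.eqb j i then 1 else g j) * g i = prod_upto n g.
Proof.
  induction n as [|n IH]; intros Hi; [lia|]. simpl.
  destruct (Nat.eqb_spec n i) as [->|Hni].
  - rewrite prod_skip_out_of_range by lia. ring.
  - rewrite <- IH by lia. ring.
Qed.

Lemma prod_const (n : nat) (c : R) : prod_upto n (fun _ => c) = c ^ n.
Proof. induction n as [|n IH]; cbn [prod_upto pow]; [reflexivity | rewrite IH; ring]. Qed.

Lemma prod_skip_const (n i : nat) (c : R) : (i < n)%nat ->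
  prod_upto n (fun j => if Nat.eqb j i then 1 else c) = c ^ (n - 1).
Proof.
  induction n as [|n IH]; intros Hi; [lia|]. cbn [prod_upto].
  destruct (Nat.eqb_spec n i) as [->|Hni].
  - rewrite (prod_skip_out_of_range i i (fun _ => c) (le_n i)), prod_const.
    replace (S i - 1)%nat with i by lia. ring.
  - rewrite IH by lia. replace (S n - 1)%nat with (S (n - 1)) by lia.
    cbn [pow]. ring.
Qed.

Lemma prod_others_symmetric (n i : nat) (T : nat -> ER) (t : R) :
  (i < n)%nat -> (forall j, (j < n)%nat -> T j = Fin t) ->
  prod_others n i T = Fexp t ^ (n - 1).
Proof.
  intros Hi HT. unfold prod_others.
  rewrite <- (prod_skip_const n i (Fexp t) Hi).
  apply prod_ext. intros j Hj. rewrite HT by auto. reflexivity.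
Qed.

Lemma symmetric_equilibrium (n : nat) (p t : R) :
  0 <= t -> t * Fexp t ^ (n - 1) = p -> p <> 0 ->
  is_equilibrium n (fun _ => p) (fun _ => Fin t).
Proof.
  intros Ht Ep Hp i Hi. split; [simpl; auto|].
  rewrite (prod_others_symmetric n i _ t Hi) by reflexivity. split.
  - intros Z. rewrite Z in Ep. exfalso. apply Hp. rewrite <- Ep. ring.
  - intros NZ. f_equal. rewrite <- Ep. field. auto.
Qed.

Section UniformPriceEquilibrium.

Variables (n : nat) (p : R) (T : nat -> ER).
Hypotheses (Hn : (1 <= n)%nat) (Hp : 0 < p)
           (HT : is_equilibrium n (fun _ => p) T).

(* Every F(T_j) is positive: an infinite threshold has F(oo) = 1, and a
   finite one equals p / P with P > 0, hence is positive. *)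
Lemma equilibrium_F_pos (j : nat) : (j < n)%nat -> 0 < FextE (T j).
Proof.
  intros Hj. destruct (HT j Hj) as [_ [Hzero Hnz]].
  destruct (Req_dec (prod_others n j T) 0) as [E|E].
  - rewrite (Hzero E). simpl. lra.
  - rewrite (Hnz E). simpl. apply Fexp_pos, Rdiv_lt_0_compat; auto.
    assert (0 <= prod_others n j T).
    { apply prod_nonneg. intros k _. destruct (Nat.eqb k j); [lra | apply FextE_ge0]. }
    lra.
Qed.

Lemma prod_others_pos (i : nat) : (i < n)%nat -> 0 < prod_others n i T.
Proof.
  intros Hi. apply prod_pos. intros j Hj.
  destruct (Nat.eqb j i); [lra | apply equilibrium_F_pos; auto].
Qed.

Lemma equilibrium_threshold (i : nat) : (i < n)%nat ->
  T i = Fin (p / prod_others n i T).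
Proof.
  intros Hi. destruct (HT i Hi) as [_ [_ Hnz]]. apply Hnz.
  pose proof (prod_others_pos i Hi). lra.
Qed.

Lemma equilibrium_balance (i : nat) : (i < n)%nat ->
  (p / prod_others n i T) * prod_upto n (fun j => FextE (T j))
  = p * Fexp (p / prod_others n i T).
Proof.
  intros Hi.
  rewrite <- (prod_skip_mul n i (fun j => FextE (T j)) Hi).
  fold (prod_others n i T). rewrite (equilibrium_threshold i Hi). simpl.
  pose proof (prod_others_pos i Hi). field. lra.
Qed.

(* All thresholds coincide, by injectivity of v / F(v). *)
Lemma equilibrium_symmetric :
  exists t, 0 < t /\ forall i, (i < n)%nat -> T i = Fin t.
Proof.
  set (x := fun i => p / prod_others n i T).
  set (Q := prod_upto n (fun j => FextE (T j))).
  assert (H0 : (0 < n)%nat) by lia.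
  assert (Hx : forall i, (i < n)%nat -> 0 < x i)
    by (intros i Hi; apply Rdiv_lt_0_compat; auto; apply prod_others_pos; auto).
  assert (HQ : 0 < Q) by (apply prod_pos, equilibrium_F_pos).
  exists (x 0%nat). split; [apply Hx; auto|].
  intros i Hi. rewrite (equilibrium_threshold i Hi). f_equal. change (x i = x 0%nat).
  pose proof (equilibrium_balance i Hi) as Bi.
  pose proof (equilibrium_balance 0 H0) as B0.
  fold (x i) Q in Bi. fold (x 0%nat) Q in B0.
  pose proof (Hx i Hi) as Hxi. pose proof (Hx 0%nat H0) as Hx0.
  rewrite Fexp_nonneg_arg in Bi, B0 by lra.
  assert (Cross : x i * (1 - exp (- x 0%nat)) = x 0%nat * (1 - exp (- x i))).
  { apply (Rmult_eq_reg_r Q); [|lra].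
    replace (x i * (1 - exp (- x 0%nat)) * Q) with ((x i * Q) * (1 - exp (- x 0%nat))) by ring.
    replace (x 0%nat * (1 - exp (- x i)) * Q) with ((x 0%nat * Q) * (1 - exp (- x i))) by ring.
    rewrite Bi, B0. ring. }
  destruct (Rtotal_order (x i) (x 0%nat)) as [L|[L|L]]; auto.
  - pose proof (ratio_strictly_increasing (x i) (x 0%nat) (conj Hxi L)). lra.
  - pose proof (ratio_strictly_increasing (x 0%nat) (x i) (conj Hx0 L)). lra.
Qed.

End UniformPriceEquilibrium.

Lemma uniform_equilibrium_characterization (n : nat) (p : R) :
  (1 <= n)%nat -> 0 < p ->
  forall T : nat -> ER, is_equilibrium n (fun _ => p) T ->
    exists t : R, 0 <= t /\
      (forall i, (i < n)%nat -> T i = Fin t) /\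
      t * Fexp t ^ (n - 1) = p /\
      (forall t' : R, 0 <= t' -> t' * Fexp t' ^ (n - 1) = p -> t' = t).
Proof.
  intros Hn Hp T HT.
  destruct (equilibrium_symmetric n p T Hn Hp HT) as [t [Ht Hsym]].
  assert (H0 : (0 < n)%nat) by lia.
  assert (Hsol : t * Fexp t ^ (n - 1) = p).
  { rewrite <- (prod_others_symmetric n 0 T t H0 Hsym).
    pose proof (prod_others_pos n p T Hp HT 0 H0).
    pose proof (equilibrium_threshold n p T Hp HT 0 H0) as E.
    rewrite Hsym in E by auto. injection E as ->. field. lra. }
  exists t. repeat split; auto; [lra|].
  intros t' Ht' E'.
  destruct (Rtotal_order t' t) as [L|[L|L]]; auto.
  - pose proof (threshold_map_strictly_increasing t' t (n - 1) (conj Ht' L)). lra.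
  - assert (Ht0 : 0 <= t) by lra.
    pose proof (threshold_map_strictly_increasing t t' (n - 1) (conj Ht0 L)). lra.
Qed.

Lemma symmetric_revenue (n : nat) (p t : R) (T : nat -> ER) :
  0 <= t -> (forall i, (i < n)%nat -> T i = Fin t) ->
  revenue n (fun _ => p) T = INR n * (p * exp (- t)).
Proof.
  intros Ht HT. unfold revenue.
  rewrite (sum_ext n _ (fun _ => p * exp (- t))); [apply sum_const|].
  intros j Hj. rewrite HT by auto. simpl. rewrite Fexp_nonneg_arg by auto. ring.
Qed.

(* Bernoulli's inequality, used to locate a sign change at price 1. *)
Lemma bernoulli_ineq (a : R) (k : nat) : 0 <= a <= 1 -> 1 - INR k * a <= (1 - a) ^ k.
Proof.
  intros Ha. induction k as [|k IH]; [simpl; lra|].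
  rewrite S_INR. simpl pow.
  assert (0 <= INR k) by apply pos_INR.
  assert ((1 - INR k * a) * (1 - a) <= (1 - a) ^ k * (1 - a))
    by (apply Rmult_le_compat_r; lra).
  nra.
Qed.

(* At price 1 the equation t F(t)^(n-1) = 1 has a positive solution:
   the left side is below 1 at t = 0 and above 1 at t = n. *)
Lemma price_one_threshold_exists (n : nat) : (2 <= n)%nat ->
  exists t, 0 < t /\ t * Fexp t ^ (n - 1) = 1.
Proof.
  intros Hn.
  set (f := fun t => t * (1 - exp (- t)) ^ (n - 1) - 1).
  assert (Hc : continuity f).
  { intros x.
    assert (D : derivable_pt_lim f x
      ((1 - exp (- x)) ^ (n - 1)
       + x * (INR (n - 1) * (1 - exp (- x)) ^ (n - 1 - 1) * exp (- x)))).
    { apply is_derive_Reals. unfold f. auto_derive; auto.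
      destruct (n - 1)%nat as [|m] eqn:Em; [lia|].
      replace (S m - 1)%nat with m by lia. simpl pred. unfold Rminus.
      set (u := exp (- x)). set (w := INR (S m)). simpl pow. ring. }
    apply (derivable_continuous_pt f x (exist _ _ D)). }
  assert (HnR : 2 <= INR n) by (apply (le_INR 2 n) in Hn; simpl in Hn; lra).
  assert (E1 : INR (n - 1) = INR n - 1) by (rewrite minus_INR by lia; simpl; ring).
  assert (f0 : f 0 < 0) by (unfold f; lra).
  assert (fn : 0 < f (INR n)).
  { unfold f. pose proof (exp_neg_bounds (INR n) ltac:(lra)).
    pose proof (bernoulli_ineq (exp (- INR n)) (n - 1) ltac:(lra)) as Bern.
    assert (1 + INR n < exp (INR n)) by (apply exp_ineq1; lra).
    assert (exp (- INR n) * exp (INR n) = 1)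
      by (rewrite <- exp_plus; replace (- INR n + INR n) with 0 by ring; apply exp_0).
    rewrite E1 in Bern.
    set (e := exp (- INR n)) in *. set (X := (1 - e) ^ (n - 1)) in *.
    assert (e * (1 + INR n) < 1) by nra.
    assert (INR n * X >= INR n * (1 - (INR n - 1) * e)) by nra.
    nra. }
  destruct (IVT f 0 (INR n) Hc ltac:(lra) f0 fn) as [z [Hz Fz]].
  assert (Hz0 : z <> 0) by (intros ->; lra).
  exists z. split; [lra|].
  rewrite Fexp_nonneg_arg by lra. unfold f in Fz. lra.
Qed.

(* From t (1 - e^{-t})^k = 1 and 1 - x <= e^{-x}: k e^{-t} <= ln t. *)
Lemma threshold_log_bound (t : R) (k : nat) :
  0 < t -> t * (1 - exp (- t)) ^ k = 1 -> INR k * exp (- t) <= ln t.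
Proof.
  intros Ht E. pose proof (exp_neg_bounds t Ht) as He.
  set (e := exp (- t)) in *.
  assert (1 - e <= exp (- e)) by (pose proof (exp_ineq1 (- e) ltac:(lra)); lra).
  assert (Hpow : (1 - e) ^ k <= exp (INR k * - e))
    by (rewrite <- exp_pow; apply pow_incr; lra).
  assert (H1 : 1 <= t * exp (INR k * - e))
    by (rewrite <- E; apply Rmult_le_compat_l; lra).
  pose proof (ln_le 1 _ Rlt_0_1 H1) as Hln.
  rewrite ln_1, ln_mult, ln_exp in Hln by (auto; apply exp_pos). lra.
Qed.

Lemma large_n_logs (n : nat) : (16 <= n)%nat ->
  16 <= INR n /\ 2 < ln (INR n) /\ 1 / 2 < ln (ln (INR n)).
Proof.
  intros Hn. assert (H16 : 16 <= INR n) by (apply le_INR in Hn; simpl in Hn; lra).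
  pose proof exp_le_3. pose proof (exp_pos 1).
  assert (E2 : exp 2 = exp 1 * exp 1) by (rewrite <- exp_plus; f_equal; ring).
  assert (L2 : 2 < ln (INR n)).
  { rewrite <- (ln_exp 2) at 1. apply ln_increasing; [apply exp_pos | nra]. }
  assert (Eh : exp (1 / 2) * exp (1 / 2) = exp 1) by (rewrite <- exp_plus; f_equal; field).
  pose proof (exp_pos (1 / 2)).
  assert (exp (1 / 2) < 2) by nra.
  repeat split; auto.
  rewrite <- (ln_exp (1 / 2)) at 1. apply ln_increasing; lra.
Qed.

(* At price 1 the revenue n e^{-t} is below 2 ln ln n: if t <= ln n then
   (n-1) e^{-t} <= ln ln n, and otherwise n e^{-t} < 1. *)
Lemma price_one_revenue_bound (n : nat) (t : R) : (16 <= n)%nat ->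
  0 < t -> t * Fexp t ^ (n - 1) = 1 -> INR n * exp (- t) < 2 * ln (ln (INR n)).
Proof.
  intros Hn Ht E.
  destruct (large_n_logs n Hn) as [H16 [L2 LL]].
  rewrite Fexp_nonneg_arg in E by lra.
  pose proof (threshold_log_bound t (n - 1) Ht E) as Hlog.
  rewrite minus_INR in Hlog by lia. simpl INR in Hlog.
  pose proof (exp_neg_bounds t Ht) as He.
  destruct (Rle_or_lt t (ln (INR n))) as [C|C].
  - assert (ln t <= ln (ln (INR n))) by (apply ln_le; lra).
    set (e := exp (- t)) in *.
    assert (15 * e <= ln (ln (INR n))) by nra.
    nra.
  - assert (Hlt : exp (- t) < / INR n).
    { rewrite <- (exp_ln (INR n)) by lra. rewrite <- exp_Ropp.
      apply exp_increasing. lra. }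
    apply (Rmult_lt_compat_l (INR n)) in Hlt; [|lra].
    rewrite Rinv_r in Hlt; lra.
Qed.

Lemma Fexp_ln (x : R) : 1 < x -> Fexp (ln x) = 1 - 1 / x.
Proof.
  intros Hx. rewrite Fexp_nonneg_arg.
  - rewrite exp_Ropp, exp_ln by lra. field. lra.
  - rewrite <- ln_1. apply ln_le; lra.
Qed.

(* (1 - 1/n)^(n-1) >= 1/e, from e^{1/(n-1)} >= 1 + 1/(n-1). *)
Lemma compound_interest_lower (n : nat) : (2 <= n)%nat ->
  / exp 1 <= (1 - 1 / INR n) ^ (n - 1).
Proof.
  intros Hn.
  assert (HnR : 2 <= INR n) by (apply (le_INR 2 n) in Hn; simpl in Hn; lra).
  set (a := 1 / (INR n - 1)).
  assert (Ha : 0 < a) by (unfold a; apply Rdiv_lt_0_compat; lra).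
  assert (1 + a <= exp a) by (left; apply exp_ineq1; lra).
  assert (exp (- a) * exp a = 1)
    by (rewrite <- exp_plus; replace (- a + a) with 0 by ring; apply exp_0).
  assert (Hexpa : exp (- a) <= 1 - 1 / INR n).
  { assert ((1 - 1 / INR n) * (1 + a) = 1) by (unfold a; field; lra).
    pose proof (exp_pos (- a)). pose proof (exp_pos a). nra. }
  replace (/ exp 1) with (exp (INR (n - 1) * - a))
    by (rewrite <- exp_Ropp; f_equal; rewrite minus_INR by lia; unfold a; simpl; field; lra).
  rewrite <- exp_pow. apply pow_incr. split; [left; apply exp_pos | exact Hexpa].
Qed.

Lemma price_one_outcome (n : nat) : (16 <= n)%nat ->
  (exists T : nat -> ER, is_equilibrium n (fun _ => 1) T) /\
  (forall T : nat -> ER, is_equilibrium n (fun _ => 1) T ->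
     revenue n (fun _ => 1) T < 2 * ln (ln (INR n))).
Proof.
  intros Hn. split.
  - destruct (price_one_threshold_exists n ltac:(lia)) as [t [Ht E]].
    exists (fun _ => Fin t). apply symmetric_equilibrium; lra.
  - intros T HT.
    destruct (uniform_equilibrium_characterization n 1 ltac:(lia) Rlt_0_1 T HT)
      as [t [Ht [Hsym [E _]]]].
    assert (Htpos : 0 < t)
      by (destruct (Req_dec t 0) as [->|]; [rewrite Rmult_0_l in E|]; lra).
    rewrite (symmetric_revenue n 1 t T Ht Hsym), Rmult_1_l.
    exact (price_one_revenue_bound n t Hn Htpos E).
Qed.

Lemma log_price_outcome (n : nat) : (16 <= n)%nat ->
  let p := ln (INR n) * (1 - 1 / INR n) ^ (n - 1) in
  is_equilibrium n (fun _ => p) (fun _ => Fin (ln (INR n))) /\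
  (forall T : nat -> ER, is_equilibrium n (fun _ => p) T ->
     (forall i, (i < n)%nat -> T i = Fin (ln (INR n))) /\
     revenue n (fun _ => p) T = p) /\
  p > ln (INR n) / 4.
Proof.
  intros Hn p. destruct (large_n_logs n Hn) as [H16 [L2 _]].
  set (L := ln (INR n)) in *.
  pose proof (compound_interest_lower n ltac:(lia)) as Hci.
  assert (Hinv : 1 / 3 <= / exp 1)
    by (unfold Rdiv; rewrite Rmult_1_l; apply Rinv_le_contravar; [apply exp_pos | apply exp_le_3]).
  assert (Hp : 0 < p) by (apply Rmult_lt_0_compat; lra).
  assert (Hsol : L * Fexp L ^ (n - 1) = p)
    by (unfold L, p; rewrite Fexp_ln by lra; reflexivity).
  split; [|split].
  - apply symmetric_equilibrium; lra.
  - intros T HT.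
    destruct (uniform_equilibrium_characterization n p ltac:(lia) Hp T HT)
      as [t [Ht [Hsym [_ Huniq]]]].
    assert (HLt : L = t) by (apply Huniq; [lra | exact Hsol]).
    subst t. split; [exact Hsym|].
    rewrite (symmetric_revenue n p L T Ht Hsym).
    unfold L. rewrite exp_Ropp, exp_ln by lra. field. lra.
  - unfold p. nra.
Qed.

Theorem mainTheorem15 :
  (* (i) *)
  (forall (n : nat) (p : R), (1 <= n)%nat -> 0 < p ->
     forall T : nat -> ER, is_equilibrium n (fun _ => p) T ->
       exists t : R, 0 <= t /\
         (forall i, (i < n)%nat -> T i = Fin t) /\
         t * Fexp t ^ (n - 1) = p /\
         (forall t' : R, 0 <= t' -> t' * Fexp t' ^ (n - 1) = p -> t' = t))
  /\
  (* (ii) *)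
  (exists N : nat, forall n : nat, (N <= n)%nat ->
     (exists T : nat -> ER, is_equilibrium n (fun _ => 1) T) /\
     (forall T : nat -> ER, is_equilibrium n (fun _ => 1) T ->
        revenue n (fun _ => 1) T < 2 * ln (ln (INR n))) /\
     (let p := ln (INR n) * (1 - 1 / INR n) ^ (n - 1) in
      is_equilibrium n (fun _ => p) (fun _ => Fin (ln (INR n))) /\
      (forall T : nat -> ER, is_equilibrium n (fun _ => p) T ->
         (forall i, (i < n)%nat -> T i = Fin (ln (INR n))) /\
         revenue n (fun _ => p) T = p) /\
      p > ln (INR n) / 4)).
Proof.
  split; [exact uniform_equilibrium_characterization|].
  exists 16%nat. intros n Hn.
  destruct (price_one_outcome n Hn) as [Hexists Hrevenue].
  split; [exact Hexists|]. split; [exact Hrevenue|].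
  exact (log_price_outcome n Hn).
Qed.
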